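(* Let $G$ be a connected twin-free bipartite graph of order $n \ge 2$. Then $i_{\max}(G) \ge \lceil n/2\rceil+1$, and this inequality is sharp.
   Context: $i_{\max}(G)$ denotes the number of maximal independent sets of $G$. A graph is twin-free if no two vertices have the same open neighbourhood. *)

From mathcomp Require Import all_boot.
Set Implicit Arguments. Unset Strict Implicit. Unset Printing Implicit Defensive.

Section Graphs.
Variable T : finType.
Variable e : rel T.

Definition simple_graph : Prop := symmetric e /\ irreflexive e.

Definition independent (S : {set T}) : bool :=
  [forall x in S, forall y in S, ~~ e x y].

Definition maximal_independent (S : {set T}) : bool :=
  independent S && [forall S' : {set T}, (S \proper S') ==> ~~ independent S'].

Definition imax : nat := #|[set S : {set T} | maximal_independent S]|.

Definition connected_graph : Prop := forall x y : T, connect e x y.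

Definition bipartite : Prop :=
  exists A : {set T}, forall x y : T, e x y -> (x \in A) != (y \in A).

Definition twin_free : Prop :=
  forall x y : T, (forall z : T, e x z = e y z) -> x = y.
End Graphs.

From mathcomp Require Import all_boot zify.
Set Implicit Arguments. Unset Strict Implicit. Unset Printing Implicit Defensive.

(* Fix a bipartition (A, B).  A maximal independent set S is determined by its
   trace S :&: B, since its vertices in A are those without a neighbour in the trace,
   and the trace is B minus the union of the neighbourhoods of S :&: A.  For every
   a in A, B minus N(a) is such a trace; together with B itself these are #|A| + 1
   distinct traces, because the graph is twin-free without isolated vertices.  So
   i_max exceeds both #|A| and #|B|, hence ceil(n/2).  When the neighbourhoods of the
   vertices of A are closed under union there are no other traces, and i_max is
   exactly #|A| + 1: a half graph, with one extra vertex on the larger side for odd n,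
   attains the bound. *)

Section MaximalIndependentSets.
Variables (T : finType) (e : rel T).
Hypotheses (e_sym : symmetric e) (e_irr : irreflexive e).

Lemma independentP (S : {set T}) :
  reflect {in S &, forall x y, ~~ e x y} (independent e S).
Proof.
apply: (iffP forall_inP) => [indS x y xS | indS x xS].
  by move/forall_inP: (indS x xS); apply.
by apply/forall_inP => y; apply: indS.
Qed.

Lemma maximal_independentP (S : {set T}) :
  reflect (independent e S /\ forall x, x \notin S -> exists2 y, y \in S & e x y)
          (maximal_independent e S).
Proof.
apply: (iffP andP) => [[indS /forallP maxS] | [indS domS]]; split=> //.
  move=> x xS.
  have [/exists_inP[y yS exy] | /exists_inPn noNbr] := boolP [exists y in S, e x y].
    by exists y.
  have: independent e (x |: S).
    apply/independentP => u v /setU1P[-> | uS] /setU1P[-> | vS].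
    - by rewrite e_irr.
    - exact: noNbr.
    - by rewrite e_sym noNbr.
    - exact: (independentP _ indS).
  have sSxS : S \proper x |: S by rewrite properUr // sub1set.
  by move/implyP/(_ sSxS)/negP: (maxS (x |: S)).
apply/forallP => S'; apply/implyP => /properP[sSS' [x xS' xS]].
have [y yS exy] := domS x xS; apply/negP => /independentP indS'.
by have := indS' x y xS' (subsetP sSS' y yS); rewrite exy.
Qed.

Definition nbhd (x : T) : {set T} := [set y | e x y].

Lemma no_isolated_vertex : connected_graph e -> 1 < #|T| -> forall x, exists y, e x y.
Proof.
move=> conn T_gt1 x; have [y yx] : exists y, y != x.
  by move: T_gt1; rewrite (cardD1 x) ltnS lt0n => /pred0Pn[y /andP[yx _]]; exists y.
case/connectP: (conn x y) => [[|z p] /=]; first by move=> _ yx_eq; rewrite -yx_eq eqxx in yx.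
by case/andP=> exz _ _; exists z.
Qed.

Section Bipartition.
Variable A : {set T}.
Hypothesis e_bip : forall x y, e x y -> (x \in A) != (y \in A).

Lemma edge_side x y : e x y -> (y \in A) = (x \notin A).
Proof. by move/e_bip; case: (x \in A); case: (y \in A). Qed.

Lemma same_side_nonadj x y : (x \in A) = (y \in A) -> ~~ e x y.
Proof. by move=> xyA; apply/negP => /edge_side; rewrite xyA; case: (y \in A). Qed.

Lemma mem_misA S x : maximal_independent e S -> x \in A ->
  (x \in S) = [forall y in S :&: ~: A, ~~ e x y].
Proof.
case/maximal_independentP=> indS domS xA; apply/idP/forall_inP => [xS y /setIP[yS _] | noNbr].
  exact: (independentP _ indS).
apply/negPn/negP => /domS[y yS exy].
by have := noNbr y; rewrite !inE yS (edge_side exy) xA exy => /(_ isT).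
Qed.

Definition mis_traces : {set {set T}} :=
  [set S :&: ~: A | S in [set S | maximal_independent e S]].

Lemma imax_traces : imax e = #|mis_traces|.
Proof.
rewrite card_in_imset // => S1 S2; rewrite !inE => misS1 misS2 eqS; apply/setP => x.
have [xA | xNA] := boolP (x \in A); first by rewrite (mem_misA misS1) ?(mem_misA misS2) ?eqS.
by move/setP/(_ x): eqS; rewrite !inE xNA !andbT.
Qed.

Lemma mis_traceE S : maximal_independent e S ->
  S :&: ~: A = ~: A :\: \bigcup_(x in S :&: A) nbhd x.
Proof.
case/maximal_independentP=> indS domS; apply/setP => y; rewrite !inE.
have [yA | yNA] := boolP (y \in A); rewrite /= ?andbF ?andbT //.
apply/idP/idP => [yS | noNbr].
  apply/bigcupP => -[x /setIP[xS _]]; rewrite inE => exy.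
  by have := independentP _ indS x y xS yS; rewrite exy.
apply/negPn/negP => /domS[x xS eyx]; apply/(negP noNbr)/bigcupP.
exists x; last by rewrite inE e_sym.
by rewrite inE xS (edge_side eyx) yNA.
Qed.

Definition co_nbhds : {set {set T}} := ~: A |: [set ~: A :\: nbhd a | a in A].

Lemma card_co_nbhds_le : #|co_nbhds| <= #|A|.+1.
Proof.
apply: leq_trans (leq_card_setU _ _) _.
by rewrite cards1 ltnS leq_imset_card.
Qed.

Lemma card_co_nbhds : twin_free e -> (forall x, exists y, e x y) -> #|co_nbhds| = #|A|.+1.
Proof.
move=> twf nbr; rewrite cardsU1 card_in_imset.
  suff -> : ~: A \notin [set ~: A :\: nbhd a | a in A] by [].
  apply/imsetP => -[a aA /setP eqN]; have [y eay] := nbr a.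
  by move: (eqN y); rewrite !inE eay (edge_side eay) aA.
move=> a a' aA a'A /setP eqN; apply: twf => z.
have [zA | zNA] := boolP (z \in A).
  have nadj b : b \in A -> e b z = false.
    by move=> bA; apply/negbTE/same_side_nonadj; rewrite bA zA.
  by rewrite !nadj.
by move: (eqN z); rewrite !inE zNA !andbT => /negb_inj.
Qed.

Lemma maximal_independent_setC :
  (forall x, exists y, e x y) -> maximal_independent e (~: A).
Proof.
move=> nbr; apply/maximal_independentP; split.
  apply/independentP => x y; rewrite !inE => xNA yNA.
  by apply: same_side_nonadj; rewrite (negbTE xNA) (negbTE yNA).
move=> x; rewrite inE negbK => xA; have [y exy] := nbr x.
by exists y; rewrite // inE (edge_side exy) xA.
Qed.

Definition mis_avoiding (a : T) : {set T} :=
  (~: A :\: nbhd a) :|: [set x in A | nbhd x \subset nbhd a].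

Lemma mem_mis_avoiding a x :
  (x \in mis_avoiding a) = if x \in A then nbhd x \subset nbhd a else ~~ e a x.
Proof. by rewrite !inE; case: (x \in A); rewrite /= ?andbF ?andbT ?orbF. Qed.

Lemma mis_avoiding_trace a : mis_avoiding a :&: ~: A = ~: A :\: nbhd a.
Proof.
apply/setP => x; rewrite inE mem_mis_avoiding !inE.
by case: (x \in A); rewrite /= ?andbF ?andbT.
Qed.

Lemma maximal_independent_avoiding a : a \in A -> maximal_independent e (mis_avoiding a).
Proof.
move=> aA; apply/maximal_independentP; split.
  apply/independentP => x y; rewrite !mem_mis_avoiding.
  have [xA | xNA] := boolP (x \in A); have [yA | yNA] := boolP (y \in A).
  - by move=> _ _; apply: same_side_nonadj; rewrite xA yA.
  - move=> /subsetP sNxNa nay; apply: contra nay => exy.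
    by have := sNxNa y; rewrite !inE; apply.
  - move=> nax /subsetP sNyNa; rewrite e_sym; apply: contra nax => eyx.
    by have := sNyNa x; rewrite !inE; apply.
  - by move=> _ _; apply: same_side_nonadj; rewrite (negbTE xNA) (negbTE yNA).
move=> x; rewrite mem_mis_avoiding; case: ifP => [xA | xNA].
  case/subsetPn=> y; rewrite !inE => exy nay; exists y => //.
  by rewrite mem_mis_avoiding (edge_side exy) xA.
by rewrite negbK => eax; exists a; rewrite 1?e_sym // mem_mis_avoiding aA.
Qed.

Lemma co_nbhds_sub_traces : (forall x, exists y, e x y) -> co_nbhds \subset mis_traces.
Proof.
move=> nbr; apply/subsetP => Y /setU1P[-> | /imsetP[a aA ->]]; apply/imsetP.
  by exists (~: A); rewrite ?inE ?maximal_independent_setC ?setIid.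
by exists (mis_avoiding a); rewrite ?inE ?maximal_independent_avoiding ?mis_avoiding_trace.
Qed.

Lemma traces_sub_co_nbhds :
  {in A &, forall a a', exists2 c, c \in A & nbhd a :|: nbhd a' = nbhd c} ->
  mis_traces \subset co_nbhds.
Proof.
move=> nbhdU; apply/subsetP => Y /imsetP[S]; rewrite inE => misS ->.
have: \bigcup_(x in S :&: A) nbhd x = set0 \/
      exists2 c, c \in A & \bigcup_(x in S :&: A) nbhd x = nbhd c.
  apply: (big_ind (fun X => X = set0 \/ exists2 c, c \in A & X = nbhd c)); first by left.
    move=> X1 X2 [-> | [a aA ->]] [-> | [b bA ->]]; rewrite ?set0U ?setU0; [by left | | |];
      right; [by exists b | by exists a | exact: nbhdU].
  by move=> x /setIP[_ xA]; right; exists x.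
rewrite (mis_traceE misS) => -[-> | [c cA ->]]; rewrite ?setD0 ?setU11 //.
exact/setU1r/imset_f.
Qed.

Lemma card_side_lt_imax : twin_free e -> (forall x, exists y, e x y) -> #|A| < imax e.
Proof.
move=> twf nbr; rewrite imax_traces -ltnS -(card_co_nbhds twf nbr) ltnS.
exact/subset_leq_card/co_nbhds_sub_traces.
Qed.

Lemma imax_le_card_side :
  {in A &, forall a a', exists2 c, c \in A & nbhd a :|: nbhd a' = nbhd c} ->
  imax e <= #|A|.+1.
Proof.
move=> nbhdU; rewrite imax_traces; apply: leq_trans card_co_nbhds_le.
exact/subset_leq_card/traces_sub_co_nbhds.
Qed.

End Bipartition.
End MaximalIndependentSets.

Theorem imax_ge_half (T : finType) (e : rel T) :
  simple_graph e -> connected_graph e -> bipartite e -> twin_free e -> 1 < #|T| ->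
  (#|T|.+1 %/ 2).+1 <= imax e.
Proof.
move=> [e_sym e_irr] conn [A e_bip] twf T_gt1.
have nbr := no_isolated_vertex conn T_gt1.
have e_bipC x y : e x y -> (x \in ~: A) != (y \in ~: A).
  by rewrite !inE => /e_bip; case: (x \in A); case: (y \in A).
have := card_side_lt_imax e_sym e_irr e_bip twf nbr.
have := card_side_lt_imax e_sym e_irr e_bipC twf nbr.
have := cardsC A; lia.
Qed.

Lemma card_ord_lt n k : k <= n -> #|[set i : 'I_n | i < k]| = k.
Proof.
move=> le_kn; have widen_inj : injective (widen_ord le_kn) by move=> i j [] /val_inj.
have -> : [set i : 'I_n | i < k] = widen_ord le_kn @: 'I_k.
  apply/setP => i; rewrite inE.
  apply/idP/imsetP => [lt_ik | [j _ ->]]; last exact: (ltn_ord j).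
  by exists (Ordinal lt_ik); last apply: val_inj.
by rewrite card_imset ?card_ord.
Qed.

(* The half graph: u_i = i and v_j = k + j for i, j < k, with u_i ~ v_j iff i <= j;
   for odd n the extra vertex 2k is joined to v_0, ..., v_(k-2). *)
Definition half_adj (k u v : nat) : bool :=
  [&& u < k, u + k <= v & v < 2 * k] || [&& u == 2 * k, k <= v & v.+1 < 2 * k].

Section HalfGraph.
Variables n k : nat.

Definition half_graph : rel 'I_n := fun u v => half_adj k u v || half_adj k v u.

Definition half_side : {set 'I_n} := [set u : 'I_n | (u < k) || (u == 2 * k :> nat)].

Lemma half_graph_sym : symmetric half_graph.
Proof. by move=> u v; rewrite /half_graph orbC. Qed.

Lemma half_graph_irr : irreflexive half_graph.
Proof. by move=> u; rewrite /half_graph /half_adj; lia. Qed.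

Lemma half_graph_bip x y : half_graph x y -> (x \in half_side) != (y \in half_side).
Proof. by rewrite !inE /half_graph /half_adj; lia. Qed.

Hypothesis n_k : (n = 2 * k /\ 0 < k) \/ (n = 2 * k + 1 /\ 1 < k).

Lemma half_graph_connected : connected_graph half_graph.
Proof.
have n_gt0 : 0 < n by lia.
have v0_lt_n : k < n by lia.
have vlast_lt_n : 2 * k - 1 < n by lia.
have to_u0 x : connect half_graph x (Ordinal n_gt0).
  have := ltn_ord x; case: (ltnP x k) => [x_u | x_nu] x_n.
    apply: connect_trans (connect1 (_ : half_graph x (Ordinal vlast_lt_n))) (connect1 _);
      rewrite /half_graph /half_adj /=; lia.
  case: (ltnP x (2 * k)) => [x_v | x_w].
    by apply: connect1; rewrite /half_graph /half_adj /=; lia.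
  apply: connect_trans (connect1 (_ : half_graph x (Ordinal v0_lt_n))) (connect1 _);
    rewrite /half_graph /half_adj /=; lia.
move=> x y; apply: connect_trans (to_u0 x) _.
by rewrite (sym_connect_sym half_graph_sym).
Qed.

Lemma half_graph_separates (x y : 'I_n) :
  x < y -> exists z, half_graph x z != half_graph y z.
Proof.
move=> lt_xy; have lt_yn := ltn_ord y; rewrite /half_graph /half_adj.
have [y_u | y_nu] := ltnP y k.
  have z_n : k + x < n by lia.
  by exists (Ordinal z_n) => /=; lia.
have [x_u | x_nu] := ltnP x k.
  have z_n : 2 * k - 1 < n by lia.
  by exists (Ordinal z_n) => /=; lia.
have [y_v | y_w] := ltnP y (2 * k).
  have z_n : y - k < n by lia.
  by exists (Ordinal z_n) => /=; lia.
have z_n : k < n by lia.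
by exists (Ordinal z_n) => /=; lia.
Qed.

Lemma half_graph_twin_free : twin_free half_graph.
Proof.
move=> x y same_nbhd; apply: val_inj.
case: (ltngtP x y) => [lt_xy | lt_yx | //].
  by have [z] := half_graph_separates lt_xy; rewrite same_nbhd eqxx.
by have [z] := half_graph_separates lt_yx; rewrite same_nbhd eqxx.
Qed.

Lemma nbhd_half_u (a : 'I_n) :
  a < k -> nbhd half_graph a = [set v : 'I_n | a + k <= v < 2 * k].
Proof. by move=> a_u; apply/setP => v; rewrite !inE /half_graph /half_adj; lia. Qed.

Lemma nbhd_half_w (a : 'I_n) :
  a = 2 * k :> nat -> nbhd half_graph a = [set v : 'I_n | k <= v & v.+1 < 2 * k].
Proof. by move=> a_w; apply/setP => v; rewrite !inE /half_graph /half_adj; lia. Qed.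

Lemma half_side_nbhdU :
  {in half_side &, forall a a', exists2 c, c \in half_side &
     nbhd half_graph a :|: nbhd half_graph a' = nbhd half_graph c}.
Proof.
have n_gt0 : 0 < n by lia.
suff nbhdU a a' : a \in half_side -> a' \in half_side -> a <= a' ->
    exists2 c, c \in half_side & nbhd half_graph a :|: nbhd half_graph a' = nbhd half_graph c.
  move=> a a' aA a'A; case: (leqP a a') => [le_aa' | /ltnW le_a'a]; first exact: nbhdU.
  by rewrite setUC; apply: nbhdU.
rewrite !inE => /orP[a_u | /eqP a_w] /orP[a'_u | /eqP a'_w] le_aa'; last 1 first.
- have -> : a' = a by apply: val_inj; rewrite /= a_w a'_w.
  by exists a; rewrite ?setUid // inE a_w eqxx orbT.
- exists a; rewrite ?inE ?a_u // !nbhd_half_u //.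
  by apply/setP => v; rewrite !inE; lia.
- exists (Ordinal n_gt0); rewrite ?inE /=; first lia.
  rewrite nbhd_half_u // nbhd_half_w // nbhd_half_u /=; last lia.
  by apply/setP => v; rewrite !inE; have := ltn_ord v; lia.
- lia.
Qed.

Lemma card_half_side : #|half_side| = n.+1 %/ 2.
Proof.
have le_kn : k <= n by lia.
case: n_k => [[n_even _] | [n_odd _]].
  have -> : half_side = [set u : 'I_n | u < k].
    by apply/setP => u; rewrite !inE; have := ltn_ord u; lia.
  by rewrite card_ord_lt //; lia.
have lt_2kn : 2 * k < n by lia.
have -> : half_side = Ordinal lt_2kn |: [set u : 'I_n | u < k].
  by apply/setP => u; rewrite !inE -val_eqE /=; have := ltn_ord u; lia.
by rewrite cardsU1 card_ord_lt // inE /=; lia.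
Qed.

End HalfGraph.

Theorem theorem1p3 :
  (forall (T : finType) (e : rel T),
      simple_graph e -> connected_graph e -> bipartite e -> twin_free e ->
      2 <= #|T| ->
      (#|T|.+1 %/ 2).+1 <= imax e)
  /\
  (forall n : nat, 2 <= n -> n != 3 ->
      exists e : rel 'I_n,
        [/\ simple_graph e, connected_graph e, bipartite e, twin_free e &
            imax e = (n.+1 %/ 2).+1]).
Proof.
split=> [T e | n n_ge2 n_ne3]; first exact: imax_ge_half.
pose k := n./2; pose G : rel 'I_n := half_graph k.
have n_k : (n = 2 * k /\ 0 < k) \/ (n = 2 * k + 1 /\ 1 < k).
  by have := odd_double_half n; rewrite -/k -mul2n; case: (odd n) => /=; lia.
have simple : simple_graph G by split; [exact: half_graph_sym | exact: half_graph_irr].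
have bip : bipartite G by exists (half_side n k); apply: half_graph_bip.
have conn := half_graph_connected n_k.
have twf := half_graph_twin_free n_k.
exists G; split=> //; apply/eqP; rewrite eqn_leq.
have := imax_le_card_side (@half_graph_sym n k) (@half_graph_irr n k) (@half_graph_bip n k)
                     (half_side_nbhdU n_k).
rewrite card_half_side // => ->.
by rewrite -{1}(card_ord n) imax_ge_half ?card_ord.
Qed.
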